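(* For every $n\ge 0$ there is a UFA with $n$ states such that both its forward determinization and its backward determinization have at least $\frac12\sqrt{n+1}\cdot 2^{n/2}$ states.
   Context: A UFA is an NFA $(Q,\Sigma,\delta,I,F)$ (finite states $Q$, finite alphabet $\Sigma$, transitions $\delta\subseteq Q\times\Sigma\times Q$, initial states $I$, accepting states $F$) in which every word has at most one accepting run (run from a state of $I$ to a state of $F$). For $S\subseteq Q$, $w\in\Sigma^*$: $\delta(S,w)=\{r\mid\exists q\in S.\ q\xrightarrow{w}r\}$, $\delta^{-1}(w,S)=\{r\mid \exists q\in S.\ r\xrightarrow{w} q\}$. The forward determinization has state set $\{\delta(I,w)\mid w\in\Sigma^*\}$; the backward determinization has state set $\{\delta^{-1}(w,F)\mid w\in\Sigma^*\}$. *)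

From mathcomp Require Import all_boot.
From mathcomp Require Import boolp.
Set Implicit Arguments. Unset Strict Implicit. Unset Printing Implicit Defensive.

Record nfa (Q S : finType) := NFA {
  trans : Q -> S -> Q -> bool;
  init : {set Q};
  final : {set Q} }.

Section Auto.
Variables (Q S : finType) (A : nfa Q S).

(* run_from q w r : r = [q1;...;qk] is the sequence of states visited after q
   when reading w = [a1;...;ak], i.e. q -a1-> q1 -a2-> ... -ak-> qk. *)
Fixpoint run_from (q : Q) (w : seq S) (r : seq Q) : bool :=
  match w, r with
  | [::], [::] => true
  | a :: w', q' :: r' => trans A q a q' && run_from q' w' r'
  | _, _ => false
  end.

Definition accepting_run (w : seq S) (q0 : Q) (r : seq Q) : bool :=
  [&& q0 \in init A, run_from q0 w r & last q0 r \in final A].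

Definition is_UFA : Prop :=
  forall w q0 r q0' r', accepting_run w q0 r -> accepting_run w q0' r' ->
    q0 = q0' /\ r = r'.

Definition delta_fw (X : {set Q}) (w : seq S) : {set Q} :=
  foldl (fun (Y : {set Q}) a => [set p | [exists q in Y, trans A q a p]]) X w.

Definition delta_bw (w : seq S) (X : {set Q}) : {set Q} :=
  foldr (fun a (Y : {set Q}) => [set p | [exists q in Y, trans A p a q]]) X w.

Definition fw_det_states : {set {set Q}} :=
  [set X | `[< exists w : seq S, X = delta_fw (init A) w >]].
Definition bw_det_states : {set {set Q}} :=
  [set X | `[< exists w : seq S, X = delta_bw w (final A) >]].
End Auto.

(* Fix a set Y of q states and consider the families
     famF = sets meeting Y in at most one state,
     famB = subsets of Y, together with all sets of size at most one.
   Any member of famF meets any member of famB in at most one state.  The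
   "cross automaton" has one letter (U, V) for each U in famB and V in famF,
   allowing a move from any state of U to any state of V, and initial =
   final = a set of at most one state.  The cross-intersection property
   makes every accepting run unique; single-letter words reach every famF
   set forwards and every famB set backwards.  Hence the determinizations
   have at least 2^(n-q) (q+1) and 2^q states respectively. *)

From mathcomp Require Import all_boot.
From mathcomp Require Import boolp.
From mathcomp Require Import zify ring.
Set Implicit Arguments. Unset Strict Implicit. Unset Printing Implicit Defensive.

Lemma fw_det_states_gt0 (Q S : finType) (A : nfa Q S) : 0 < #|fw_det_states A|.
Proof. by apply/card_gt0P; exists (init A); rewrite inE; apply/asboolP; exists [::]. Qed.

Lemma bw_det_states_gt0 (Q S : finType) (A : nfa Q S) : 0 < #|bw_det_states A|.
Proof. by apply/card_gt0P; exists (final A); rewrite inE; apply/asboolP; exists [::]. Qed.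

Section CrossAutomaton.
Variables (Q : finType) (famV famU : pred {set Q}) (I J : {set Q}).

Definition cross_nfa : nfa Q ({set Q} * {set Q})%type :=
  @NFA _ _ (fun a (l : {set Q} * {set Q}) b => [&& famU l.1, famV l.2, a \in l.1 & b \in l.2])
      I J.

(* If every famV set meets every famU set in at most one state, the state
   before each letter is pinned down, so accepting runs are unique. *)
Section Unambiguous.
Hypothesis cross_le1 : forall S T, famV S -> famU T -> #|S :&: T| <= 1.
Hypotheses (famV_I : famV I) (famU_J : famU J).

Lemma cross_eq S T x y : famV S -> famU T ->
  x \in S -> x \in T -> y \in S -> y \in T -> x = y.
Proof.
move=> hS hT xS xT yS yT; have /card_le1_eqP := cross_le1 hS hT.
by apply; rewrite inE ?xS ?yS.
Qed.

Lemma cross_runs_eq w : forall V q q' r r', famV V -> q \in V -> q' \in V ->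
  run_from cross_nfa q w r -> run_from cross_nfa q' w r' ->
  last q r \in J -> last q' r' \in J -> q = q' /\ r = r'.
Proof.
elim: w => [|[U V1] w IH] V q q' r r' hV qV q'V.
  by case: r => //; case: r' => // _ _ /= qJ q'J; rewrite (cross_eq hV famU_J qV qJ q'V q'J).
case: r => // s r; case: r' => // s' r' /=.
move=> /andP[/and4P[hU hV1 qU sV1] run] /andP[/and4P[_ _ q'U s'V1] run'] fin fin'.
have [-> ->] := IH V1 s s' r r' hV1 sV1 s'V1 run run' fin fin'.
by rewrite (cross_eq hV hU qV qU q'V q'U).
Qed.

Lemma cross_nfa_UFA : is_UFA cross_nfa.
Proof.
move=> w q0 r q0' r' /and3P[q0I run fin] /and3P[q0'I run' fin'].
exact: (cross_runs_eq famV_I q0I q0'I run run' fin fin').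
Qed.
End Unambiguous.

(* From an initial state x0, the single letter ([set x0], S) reaches exactly
   S; so every famV set is a state of the forward determinization. *)
Lemma famV_sub_fw x0 : x0 \in I -> famU [set x0] ->
  [set S | famV S] \subset fw_det_states cross_nfa.
Proof.
move=> x0I hx0; apply/subsetP => S; rewrite !inE => hS; apply/asboolP.
exists [:: ([set x0], S)]; apply/setP => p; rewrite /delta_fw /= inE.
apply/idP/existsP => [pS | [q /andP[_ /and4P[_ _ _ ->]]]] //.
by exists x0; rewrite x0I /= hx0 hS set11 pS.
Qed.

(* Dually, the letter (T, [set x0]) with x0 final pulls J back to T. *)
Lemma famU_sub_bw x0 : x0 \in J -> famV [set x0] ->
  [set T | famU T] \subset bw_det_states cross_nfa.
Proof.
move=> x0J hx0; apply/subsetP => T; rewrite !inE => hT; apply/asboolP.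
exists [:: (T, [set x0])]; apply/setP => p; rewrite /delta_bw /= inE.
apply/idP/existsP => [pT | [q /andP[_ /and4P[_ _ -> _]]]] //.
by exists x0; rewrite x0J /= hx0 hT set11 pT.
Qed.
End CrossAutomaton.

Section SplitFamilies.
Variables (Q : finType) (Y : {set Q}).

Definition famF (S : {set Q}) : bool := #|S :&: Y| <= 1.
Definition famB (T : {set Q}) : bool := (T \subset Y) || (#|T| <= 1).

Lemma famF_famB_le1 (S T : {set Q}) : famF S -> famB T -> #|S :&: T| <= 1.
Proof.
rewrite /famF /famB => hS /orP[TY | hT].
  exact: leq_trans (subset_leq_card (setIS S TY)) hS.
exact: leq_trans (subset_leq_card (subsetIr S T)) hT.
Qed.

Lemma famF_small (S : {set Q}) : #|S| <= 1 -> famF S.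
Proof. exact: leq_trans (subset_leq_card (subsetIl S Y)). Qed.

Lemma famB_small (T : {set Q}) : #|T| <= 1 -> famB T.
Proof. by rewrite /famB => ->; rewrite orbT. Qed.

(* Every subset of Y is in famB. *)
Lemma card_famB : 2 ^ #|Y| <= #|[set T | famB T]|.
Proof.
rewrite -card_powerset; apply/subset_leq_card/subsetP => T.
by rewrite powersetE !inE /famB => ->.
Qed.

(* The possible traces on Y of a famF set: empty or a single state. *)
Definition Yparts : {set {set Q}} := set0 |: [set [set y] | y in Y].

Lemma card_Yparts : #|Yparts| = #|Y|.+1.
Proof.
rewrite cardsU1 card_imset; last exact: set1_inj.
case: imsetP => // -[y _ /setP/(_ y)]; by rewrite !inE eqxx.
Qed.

Lemma Yparts_sub (Z : {set Q}) : Z \in Yparts -> Z \subset Y.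
Proof. by rewrite !inE => /predU1P[-> | /imsetP[y yY ->]]; rewrite ?sub0set ?sub1set. Qed.

Lemma union_splitY (A Z : {set Q}) : A \subset ~: Y -> Z \subset Y ->
  (A :|: Z) :&: Y = Z /\ (A :|: Z) :&: ~: Y = A.
Proof.
move=> /subsetP AY /subsetP ZY; split; apply/setP => x; rewrite !inE;
  case: (boolP (x \in A)) => [/AY | _]; case: (boolP (x \in Z)) => [/ZY | _];
  rewrite ?inE //=; by case: (x \in Y).
Qed.

(* The union map from powerset (~: Y) x Yparts into famF is injective. *)
Lemma card_famF : 2 ^ #|~: Y| * #|Y|.+1 <= #|[set S | famF S]|.
Proof.
rewrite -card_Yparts -card_powerset -cardsX.
pose D := setX (powerset (~: Y)) Yparts.
have splitD x : x \in D -> (x.1 :|: x.2) :&: Y = x.2 /\ (x.1 :|: x.2) :&: ~: Y = x.1.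
  by rewrite inE powersetE => /andP[hA /Yparts_sub hZ]; exact: union_splitY.
rewrite -(card_in_imset (f := fun x => x.1 :|: x.2)); last first.
  move=> [A Z] [A' Z'] /splitD/= [eZ eA] /splitD/= [eZ' eA'] /= e.
  by congr pair; [rewrite -eA -eA' e | rewrite -eZ -eZ' e].
apply/subset_leq_card/subsetP => _ /imsetP[[A Z] xD ->].
have [eZ _] := splitD _ xD; rewrite inE /famF eZ.
by move: xD; rewrite !inE => /andP[_ /predU1P[-> | /imsetP[y _ ->]]]; rewrite ?cards0 ?cards1.
Qed.
End SplitFamilies.

(* k reaches the target (1/2) sqrt(n+1) 2^(n/2), squared and cleared of
   denominators. *)
Definition meets_bound (n k : nat) : bool := (n + 1) * 2 ^ n <= 4 * k ^ 2.

Lemma meets_bound_pow n : meets_bound n (2 ^ n).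
Proof. rewrite /meets_bound; have := ltn_expl n (isT : 1 < 2); nia. Qed.

(* If 4 H^2 falls short of N G while F * 2H = G and N <= 2m, then F * m
   reaches it: multiply both sides by 4 H^2. *)
Lemma cofactor_bound N G F H m : F * (2 * H) = G -> 4 * H ^ 2 < N * G ->
  N <= 2 * m -> N * G <= 4 * (F * m) ^ 2.
Proof.
move=> eG short Nm; have H0 : 0 < 4 * H ^ 2 by case: H eG short => //; lia.
rewrite -(leq_pmul2r H0); apply: leq_trans (_ : N * G * (N * G) <= _).
  by rewrite leq_mul2l ltnW ?orbT.
have -> : 4 * (F * m) ^ 2 * (4 * H ^ 2) = (2 * m) ^ 2 * (G * G) by rewrite -eG; ring.
by rewrite mulnACA leq_mul // leq_mul.
Qed.

(* Take q least with 2^q reaching the bound; minimality makes the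
   complementary quantity 2^(n-q) (q+1) reach it as well. *)
Lemma balanced_split n :
  exists2 q, q <= n & meets_bound n (2 ^ q) && meets_bound n (2 ^ (n - q) * q.+1).
Proof.
have ex : exists q, meets_bound n (2 ^ q) by exists n; exact: meets_bound_pow.
case: (ex_minnP ex) => q hq qmin {ex}.
have qn : q <= n by exact/qmin/meets_bound_pow.
have nq : n + 1 <= 2 * q.+1.
  case: n hq {qmin qn} => [|n] hq; first lia.
  have e4 : 2 ^ (2 * q.+1) = 4 * (2 ^ q) ^ 2 by rewrite -expnM mulnC expnS expnS mulnA.
  rewrite -(leq_exp2l _ _ (isT : 1 < 2)) e4 addn1 expnS.
  by apply: leq_trans hq; rewrite leq_mul2r addn1 ltnS lt0n orbT.
exists q => //; rewrite hq /=; case: q hq qmin nq qn => [|p] hq qmin nq qn.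
  rewrite subn0 muln1; apply: leq_trans hq _.
  by rewrite leq_mul2l leq_exp2r // expn_gt0.
have short : 4 * (2 ^ p) ^ 2 < (n + 1) * 2 ^ n.
  by rewrite ltnNge; apply/negP => /qmin; rewrite ltnn.
apply: cofactor_bound short nq.
by rewrite -expnS -expnD subnK.
Qed.

Section SplitAutomaton.
Variables (Q : finType) (Y I : {set Q}).

Definition split_nfa : nfa Q ({set Q} * {set Q})%type :=
  cross_nfa (famF Y) (famB Y) I I.

Lemma split_nfa_UFA : #|I| <= 1 -> is_UFA split_nfa.
Proof.
move=> I_small; apply: cross_nfa_UFA.
- exact: famF_famB_le1.
- exact: famF_small.
- exact: famB_small.
Qed.

Lemma split_fw_card x0 : x0 \in I -> 2 ^ #|~: Y| * #|Y|.+1 <= #|fw_det_states split_nfa|.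
Proof.
move=> x0I; apply: leq_trans (card_famF Y) _.
apply/subset_leq_card/(famV_sub_fw (famF Y) I x0I).
by apply: famB_small; rewrite cards1.
Qed.

Lemma split_bw_card x0 : x0 \in I -> 2 ^ #|Y| <= #|bw_det_states split_nfa|.
Proof.
move=> x0I; apply: leq_trans (card_famB Y) _.
apply/subset_leq_card/(famU_sub_bw (famB Y) I x0I).
by apply: famF_small; rewrite cards1.
Qed.
End SplitAutomaton.

(* Imported only here: Stdlib's Reals rebinds the nat notation [^]. *)
From Stdlib Require Import Reals Lra.

Lemma INR_expn a b : INR (expn a b) = (INR a ^ b)%R.
Proof. by elim: b => [|b IH] //; rewrite expnS -multE mult_INR IH. Qed.

Lemma target_sqrt n : (/ 2 * sqrt (INR (n + 1)) * Rpower 2 (INR n / 2) =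
  / 2 * sqrt (INR ((n + 1) * expn 2 n)))%R.
Proof.
have -> : Rpower 2 (INR n / 2) = sqrt (2 ^ n).
  by rewrite /Rdiv -Rpower_mult Rpower_pow ?Rpower_sqrt //; [apply: pow_lt | ]; lra.
rewrite Rmult_assoc -sqrt_mult; [by rewrite (mult_INR (n + 1)) INR_expn | exact: pos_INR |].
by apply: pow_le; lra.
Qed.

Lemma meets_bound_real n k : meets_bound n k ->
  (/ 2 * sqrt (INR (n + 1)) * Rpower 2 (INR n / 2) <= INR k)%R.
Proof.
move=> /leP /le_INR hk; rewrite target_sqrt.
have -> : INR k = (/ 2 * sqrt (INR (4 * expn k 2)))%R.
  rewrite (mult_INR 4) INR_expn (_ : (INR 4 * INR k ^ 2 = (2 * INR k) * (2 * INR k))%R).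
    by rewrite sqrt_square; [field | have := pos_INR k; lra].
  by rewrite /INR; ring.
by apply: Rmult_le_compat_l; [lra | exact: sqrt_le_1_alt].
Qed.

Theorem proposition3 (n : nat) :
  exists (S : finType) (A : nfa 'I_n S),
    is_UFA A /\
    (/ 2 * sqrt (INR (n + 1)) * Rpower 2 (INR n / 2) <= INR #|fw_det_states A|)%R /\
    (/ 2 * sqrt (INR (n + 1)) * Rpower 2 (INR n / 2) <= INR #|bw_det_states A|)%R.
Proof.
have [q qn /andP[bw_bound fw_bound]] := balanced_split n.
pose Y : {set 'I_n} := [set widen_ord qn i | i : 'I_q].
have cardY : #|Y| = q.
  by rewrite card_imset ?card_ord //; move=> i j /= /(congr1 val) ij; apply: ord_inj.
have cardCY : #|~: Y| = n - q by have := cardsC Y; rewrite card_ord cardY; lia.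
(* initial = final = the state 0, when there is one *)
pose I : {set 'I_n} := [set x | val x == 0].
have I_small : #|I| <= 1.
  by apply/card_le1_eqP => x y; rewrite !inE => /eqP x0 /eqP y0; apply: val_inj; rewrite x0 y0.
exists _, (split_nfa Y I); split; first exact: split_nfa_UFA.
(* both counts; without states (n = 0) they are trivial since q = 0 *)
have [fw_card bw_card] : expn 2 (n - q) * q.+1 <= #|fw_det_states (split_nfa Y I)| /\
                         expn 2 q <= #|bw_det_states (split_nfa Y I)|.
  have [n0 | n_pos] := posnP n.
    have q0 : q = 0 by lia.
    have -> : expn 2 (n - q) * q.+1 = 1 by rewrite n0 q0.
    by rewrite q0; split; [exact: fw_det_states_gt0 | exact: bw_det_states_gt0].
  have x0I : Ordinal n_pos \in I by rewrite inE.
  by rewrite -cardCY -cardY; split; [exact: split_fw_card x0I | exact: split_bw_card x0I].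
split.
- by apply: Rle_trans (meets_bound_real fw_bound) _; apply/le_INR/leP.
- by apply: Rle_trans (meets_bound_real bw_bound) _; apply/le_INR/leP.
Qed.
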